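(* Fix $c\in\mathbb{N}_0$ and let $A=\mathbb{K}[x_ix_j: i,j\in\mathbb{N},\ i\le j\le i+c]\subseteq R=\mathbb{K}[x_i: i\in\mathbb{N}]$. Then the set of string presentations of the monomials of $A$ is $\{x_{i_1}x_{i_2}\cdots x_{i_{2d-1}}x_{i_{2d}}: d\in\mathbb{N}_0,\ i_1\le i_2\le\cdots\le i_{2d},\ i_{2k}-i_{2k-1}\le c \text{ for } 1\le k\le d\}.$
   Context: $\mathbb{K}$ is a field. The string presentation of a monomial of $R$ is the unique word in the noncommuting letters $x_1,x_2,\dots$ representing it in which the indices appear in nondecreasing order from left to right (e.g. $x_1x_2\cdot x_1x_3$ has string presentation $x_1x_1x_2x_3$). *)

From mathcomp Require Import all_boot all_algebra.
From mathcomp Require Import finmap.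
From mathcomp.multinomials Require Import monalg.
Set Implicit Arguments. Unset Strict Implicit. Unset Printing Implicit Defensive.
Import GRing.Theory.
Local Open Scope ring_scope.

(* The polynomial ring R = K[x_i : i in nat] in countably many commuting
   variables, as the monoid algebra over commutative monomials indexed by nat.
   The variable x_i is indexed by i; the paper only uses i >= 1. *)
Definition polyR (K : fieldType) := {malg K[cmonom nat]}.

Definition xvar (K : fieldType) (i : nat) : polyR K := << ucm i >>.

Definition algA (K : fieldType) (c : nat) (f : polyR K) : Prop :=
  forall S : polyR K -> Prop,
    S 1 ->
    (forall (a : K) g, S g -> S (a *: g)) ->
    (forall g h, S g -> S h -> S (g + h)) ->
    (forall g h, S g -> S h -> S (g * h)) ->
    (forall i j, (0 < i)%N -> (i <= j)%N -> (j <= i + c)%N -> S (xvar K i * xvar K j)) ->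
    S f.

Definition monom_of_word (w : seq nat) : cmonom nat :=
  (\big[mmul/mone]_(i <- w) ucm i)%M.

Definition string_pres (m : cmonom nat) (w : seq nat) : Prop :=
  sorted leq w /\ monom_of_word w = m.

Definition monom_of_A (K : fieldType) (c : nat) (m : cmonom nat) : Prop :=
  algA c (<< m >> : polyR K).

(** A monomial lies in A iff it is a product of generators x_i x_j, i.e. iff
    some word representing it splits into consecutive pairs of letters at
    distance at most c; the forward direction follows by tracking supports
    through the closure properties defining A.  It remains to see that the
    sorted word then splits in this way too.  Let a <= b be its two smallest
    letters, with a paired to x and b paired to y in some admissible pairing.
    Then a <= b <= x, y, x <= a + c and y <= b + c, so a, b are within c of
    each other and so are x, y: re-pairing (a, b) and (x, y) and recursing on
    the remaining letters gives the consecutive pairing of the sorted word. *)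

From mathcomp Require Import all_boot all_algebra.
From mathcomp Require Import finmap.
From mathcomp.multinomials Require Import monalg.
From mathcomp Require Import zify.
Set Implicit Arguments. Unset Strict Implicit. Unset Printing Implicit Defensive.
Import GRing.Theory.

Section Paired.
Variables (T : eqType) (r : rel T).

Fixpoint paired (s : seq T) : bool :=
  match s with
  | [::] => true
  | a :: b :: s' => r a b && paired s'
  | _ => false
  end.

Lemma paired_cat s1 s2 : paired s1 -> paired s2 -> paired (s1 ++ s2).
Proof.
have [n] := ubnP (size s1).
elim: n s1 => // n IH [|a [|b s1]] //= /ltnW/ltnSE lt_s1n.
by case/andP=> -> /IH; apply.
Qed.

Lemma pairedP (x0 : T) s :
  reflect (exists d, size s = d.*2 /\
             forall k, k < d -> r (nth x0 s k.*2) (nth x0 s k.*2.+1))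
          (paired s).
Proof.
apply: (iffP idP) => [|[d []]].
- have [n] := ubnP (size s); elim: n s => // n IH [|a [|b s]] //=.
    by exists 0.
  move=> /ltnW/ltnSE lt_sn /andP[rab /IH[// | d [-> r_nth]]].
  by exists d.+1; split=> [|[|k] lt_kd]; rewrite ?doubleS //=; apply: r_nth.
- elim: d s => [|d IH] [|a [|b s]] //=; rewrite doubleS => -[size_s] r_nth.
  apply/andP; split; first exact: (r_nth 0).
  by apply: IH => // k /(r_nth k.+1); rewrite doubleS.
Qed.

Hypothesis r_sym : symmetric r.

Lemma paired_perm_cons s a : paired s -> a \in s ->
  exists x s', [/\ perm_eq s [:: a, x & s'], r a x & paired s'].
Proof.
have [n] := ubnP (size s); elim: n s => // n IH [|a0 [|b0 s]] //=.
move=> /ltnW/ltnSE lt_sn /andP[rab ps]; rewrite !inE => /or3P[/eqP->|/eqP->|s_a].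
- by exists b0, s.
- exists a0, s; split=> //; last by rewrite r_sym.
  by rewrite (perm_catCA [:: a0] [:: b0]).
- have [x [s' [perm_s rax ps']]] := IH s lt_sn ps s_a.
  exists x, [:: a0, b0 & s']; split=> //=; last by rewrite rab.
  rewrite perm_sym (perm_catCA [:: a; x] [:: a0; b0]) /= !perm_cons.
  by rewrite perm_sym.
Qed.

End Paired.

Section NearPairs.
Variable c : nat.

Definition near (a b : nat) : bool := (a - b <= c) && (b - a <= c).

Lemma nearC : symmetric near.
Proof. by move=> a b; rewrite /near andbC. Qed.

Lemma near_leE a b : a <= b -> near a b = (b - a <= c).
Proof. by rewrite /near; lia. Qed.

Lemma near_rematch a b x y : a <= b -> b <= x -> b <= y ->
  near a x -> near b y -> near a b && near x y.
Proof. by rewrite /near; lia. Qed.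

Lemma sorted_paired_perm w u :
  sorted leq w -> perm_eq w u -> paired near u -> paired near w.
Proof.
have [n] := ubnP (size w); elim: n w u => // n IH [|a [|b w]] u //= lt_wn.
- by move=> _ /perm_size; case: u => [|? []].
- move=> /andP[le_ab sorted_bw] perm_w pu.
  have lt_w'n : size w < n by rewrite -ltnS ltnW.
  have u_a : a \in u by rewrite -(perm_mem perm_w) mem_head.
  have [x [u1 [perm_u rax pu1]]] := paired_perm_cons nearC pu u_a.
  have perm_bw : perm_eq (b :: w) (x :: u1).
    by rewrite -(perm_cons a) (perm_trans perm_w perm_u).
  have le_bw : all (leq b) w.
    by apply: order_path_min sorted_bw; exact: leq_trans.
  have le_b (z : nat) : z \in x :: u1 -> b <= z.
    by rewrite -(perm_mem perm_bw) inE => /predU1P[->|/(allP le_bw)].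
  have [bx|neq_bx] := eqVneq b x.
    rewrite -bx in rax perm_bw; rewrite rax (IH w u1) //.
      exact: path_sorted sorted_bw.
    by rewrite -(perm_cons b).
  have u1_b : b \in u1.
    by move: (perm_mem perm_bw b); rewrite !inE eqxx (negPf neq_bx).
  have [y [u2 [perm_u1 rby pu2]]] := paired_perm_cons nearC pu1 u1_b.
  have perm_w' : perm_eq w [:: x, y & u2].
    rewrite -(perm_cons b); apply: perm_trans perm_bw _.
    by rewrite perm_sym (perm_catCA [:: b] [:: x]) /= perm_cons perm_sym.
  have le_bx : b <= x by apply: le_b; rewrite mem_head.
  have le_by : b <= y by apply: le_b; rewrite inE (perm_mem perm_u1) !inE eqxx !orbT.
  have /andP[-> rxy] := near_rematch le_ab le_bx le_by rax rby.
  apply: (IH w [:: x, y & u2]) => //=; last by rewrite rxy.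
  exact: path_sorted sorted_bw.
Qed.

Lemma sorted_pairedP w : sorted leq w ->
  reflect (exists d, size w = d.*2 /\
             forall k, k < d -> nth 0 w k.*2.+1 - nth 0 w k.*2 <= c)
          (paired near w).
Proof.
move=> sorted_w; have le_nth k : k.*2.+1 < size w -> nth 0 w k.*2 <= nth 0 w k.*2.+1.
  by move=> lt_k; apply: (sorted_leq_nth leq_trans leqnn) => //; rewrite inE ltnW.
apply: (iffP (@pairedP _ near 0 w)) => -[d [size_w near_w]].
all: exists d; split=> // k lt_kd.
all: have lt_k : k.*2.+1 < size w by rewrite size_w ltn_Sdouble.
- by rewrite -(near_leE (le_nth k lt_k)) near_w.
- by rewrite (near_leE (le_nth k lt_k)) near_w.
Qed.

End NearPairs.

Lemma monom_of_wordE w i : monom_of_word w i = count_mem i w.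
Proof.
elim: w => [|a w IH]; first by rewrite /monom_of_word big_nil cm1.
by rewrite /monom_of_word big_cons cmM -/(monom_of_word w) IH cmU.
Qed.

Lemma monom_of_word_perm_eq w u :
  monom_of_word w = monom_of_word u -> perm_eq w u.
Proof. by move=> eq_wu; apply/allP => i _ /=; rewrite -!monom_of_wordE eq_wu. Qed.

Lemma monom_of_word_cat w u :
  monom_of_word (w ++ u) = mmul (monom_of_word w) (monom_of_word u).
Proof. by rewrite /monom_of_word big_cat. Qed.

Lemma malgUM (M : monomType) (R : ringType) (k1 k2 : M) :
  (<< k1 >> * << k2 >> = << mmul k1 k2 >> :> {malg R[M]})%R.
Proof. by rewrite malgM_def fgmulUU mulr1. Qed.

Definition paired_monom (c : nat) (k : cmonom nat) : Prop :=
  exists u, [/\ paired (near c) u, all (fun i => 0 < i) u & monom_of_word u = k].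

Section AlgebraA.
Variables (K : fieldType) (c : nat).

Lemma algA1 : algA c (1 : polyR K)%R.
Proof. by move=> S S1. Qed.

Lemma algAM (f g : polyR K) : algA c f -> algA c g -> algA c (f * g)%R.
Proof.
move=> Af Ag S S1 SZ SD SM Sgen.
by apply: (SM); [apply: (Af S) | apply: (Ag S)].
Qed.

Lemma xvarM_near i j : 0 < i -> 0 < j -> near c i j ->
  algA c (<< monom_of_word [:: i; j] >> : polyR K)%R.
Proof.
move=> i_gt0 j_gt0 nij S S1 SZ SD SM Sgen.
have -> : monom_of_word [:: i; j] = mmul (ucm i) (ucm j).
  by rewrite /monom_of_word !big_cons big_nil mulm1.
rewrite -malgUM; have [le_ij|/ltnW le_ji] := leqP i j.
  by apply: Sgen; rewrite // -leq_subLR -near_leE.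
by rewrite mulrC; apply: Sgen; rewrite // -leq_subLR -near_leE // nearC.
Qed.

Lemma paired_algA u : paired (near c) u -> all (fun i => 0 < i) u ->
  algA c (<< monom_of_word u >> : polyR K)%R.
Proof.
have [n] := ubnP (size u); elim: n u => // n IH [|a [|b u]] //= lt_un.
  by rewrite /monom_of_word big_nil => _ _; apply: algA1.
move=> /andP[nab pu] /and3P[a_gt0 b_gt0 u_gt0].
rewrite -[[:: a, b & u]]/([:: a; b] ++ u) monom_of_word_cat -malgUM.
by apply: algAM; [apply: xvarM_near | apply: IH (ltnW lt_un) pu u_gt0].
Qed.

Lemma algA_msupp (f : polyR K) k : algA c f -> (k \in msupp f)%fset ->
  paired_monom c k.
Proof.
move=> Af; move: k.
apply: (Af (fun g => forall k, k \in msupp g -> paired_monom c k)).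
- move=> k; rewrite msuppU1 in_fset1 => /eqP->.
  by exists [::]; rewrite /monom_of_word big_nil.
- by move=> a g IHg k /(fsubsetP (msuppZ_le a g)); apply: IHg.
- move=> g h IHg IHh k /(fsubsetP (msuppD_le g h)).
  by rewrite in_fsetU => /orP[]; [apply: IHg | apply: IHh].
- move=> g h IHg IHh k /msuppM_le[k1 [k2 [/IHg[u1 [pu1 pos1 <-]]]]].
  move=> /IHh[u2 [pu2 pos2 <-]] ->.
  exists (u1 ++ u2); rewrite paired_cat // all_cat pos1 pos2.
  by rewrite monom_of_word_cat.
- move=> i j i_gt0 le_ij le_jc k; rewrite /xvar malgUM msuppU1 in_fset1 => /eqP->.
  exists [:: i; j]; rewrite /= i_gt0 (leq_trans i_gt0 le_ij) near_leE //.
  by rewrite leq_subLR le_jc /monom_of_word !big_cons big_nil mulm1.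
Qed.

End AlgebraA.

Theorem lemma5p1 (K : fieldType) (c : nat) (w : seq nat) :
  (exists m : cmonom nat, monom_of_A K c m /\ string_pres m w) <->
  (exists d : nat,
      size w = d.*2 /\ sorted leq w /\ all (fun i => 0 < i) w /\
      (forall k : nat, k < d -> nth 0 w k.*2.+1 - nth 0 w k.*2 <= c)).
Proof.
split=> [[m [Am [sorted_w wm]]] | [d [size_w [sorted_w [w_gt0 near_w]]]]].
- have m_supp : (m \in msupp (<< m >> : polyR K)%R)%fset.
    by rewrite msuppU1 fset11.
  have [u [pu u_gt0 um]] := algA_msupp Am m_supp.
  have perm_wu : perm_eq w u by apply: monom_of_word_perm_eq; rewrite wm um.
  have /(sorted_pairedP _ sorted_w)[d [size_w near_w]] :=
    sorted_paired_perm sorted_w perm_wu pu.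
  by exists d; rewrite (perm_all _ perm_wu) u_gt0.
- exists (monom_of_word w); split; last by [].
  apply: paired_algA w_gt0.
  by apply/(sorted_pairedP _ sorted_w); exists d.
Qed.
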